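(* Let $\mathcal{G}=(\mathcal{V},\mathcal{E},A)$ be a connected directed graph with diagonal matrix of out-degrees $D$, and suppose there is a permutation matrix $P$ with $D=AP$. Let $\mathcal{G}_u$ be the undirected graph on the same node set with adjacency matrix $A_u=\frac12(A+A^T)$ (so $(i,j)\in\mathcal{E}$ implies both $(i,j)$ and $(j,i)$ are edges of $\mathcal{G}_u$). Then for every pair of nodes $k,j$, the effective resistance between $k$ and $j$ in $\mathcal{G}$ equals the effective resistance between $k$ and $j$ in $\mathcal{G}_u$.
   Context: A (weighted directed) graph $\mathcal{G}=(\mathcal{V},\mathcal{E},A)$ has node set $\mathcal{V}=\{1,\dots,N\}$, edge set $\mathcal{E}\subseteq\mathcal{V}\times\mathcal{V}$, and nonnegative adjacency matrix $A=[a_{i,j}]\in\mathbb{R}^{N\times N}$ with $a_{i,j}>0$ iff $(i,j)\in\mathcal{E}$; $(i,j)$ is an edge from $i$ to $j$. The graph is undirected if $A$ is symmetric. The out-degree of node $k$ is $d_k=\sum_j a_{k,j}$, $D=\mathrm{diag}(d_1,\dots,d_N)$, and the Laplacian is $L=D-A$. Directed paths follow edges in their direction. $\mathcal{G}$ is connected if it contains a globally reachable node (a node reachable by a directed path from every node). Let $\mathbf{1}_N$ be the all-ones vector, $\Pi=I_N-\frac1N\mathbf{1}_N\mathbf{1}_N^T$, and $Q\in\mathbb{R}^{(N-1)\times N}$ any matrix with $Q\mathbf{1}_N=\mathbf{0}$, $QQ^T=I_{N-1}$, $Q^TQ=\Pi$. For connected $\mathcal{G}$, let $\overline{L}=QLQ^T$,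 let $\Sigma$ be the unique solution of $\overline{L}\Sigma+\Sigma\overline{L}^T=I_{N-1}$, and $X=[x_{i,j}]=2Q^T\Sigma Q$ ($X$ does not depend on the choice of $Q$). The effective resistance between nodes $k$ and $j$ is $r_{k,j}=x_{k,k}+x_{j,j}-2x_{k,j}$. A permutation matrix has exactly one entry $1$ in each row and column and zeros elsewhere. *)

From HB Require Import structures.
From mathcomp Require Import all_boot all_order all_algebra all_fingroup.
Set Implicit Arguments. Unset Strict Implicit. Unset Printing Implicit Defensive.
Import Order.TTheory GRing.Theory Num.Theory.
Local Open Scope ring_scope.

Section Graphs.
Variables (R : rcfType) (n : nat).
Local Notation N := n.+1.

Definition nonneg_adj (A : 'M[R]_N) : Prop := forall i j, 0 <= A i j.

Definition edge_rel (A : 'M[R]_N) : rel 'I_N := fun i j => 0 < A i j.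

Definition globally_reachable (A : 'M[R]_N) (g : 'I_N) : Prop :=
  forall i, connect (edge_rel A) i g.
Definition connected_graph (A : 'M[R]_N) : Prop :=
  exists g, globally_reachable A g.

Definition out_degree (A : 'M[R]_N) (k : 'I_N) : R := \sum_j A k j.
Definition degree_mx (A : 'M[R]_N) : 'M[R]_N := diag_mx (\row_k out_degree A k).
Definition laplacian (A : 'M[R]_N) : 'M[R]_N := degree_mx A - A.

Definition undirected_adj (A : 'M[R]_N) : 'M[R]_N := 2^-1 *: (A + A^T).

Definition Pi_mx : 'M[R]_N := 1%:M - (N%:R)^-1 *: const_mx 1.

Definition is_Q (Q : 'M[R]_(n, N)) : Prop :=
  [/\ Q *m const_mx 1 = (0 : 'cV[R]_n), Q *m Q^T = 1%:M & Q^T *m Q = Pi_mx].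

Definition Lbar (A : 'M[R]_N) (Q : 'M[R]_(n, N)) : 'M[R]_n := Q *m laplacian A *m Q^T.

Definition is_Sigma (A : 'M[R]_N) (Q : 'M[R]_(n, N)) (S : 'M[R]_n) : Prop :=
  Lbar A Q *m S + S *m (Lbar A Q)^T = 1%:M.

Definition X_mx (Q : 'M[R]_(n, N)) (S : 'M[R]_n) : 'M[R]_N := 2%:R *: (Q^T *m S *m Q).

Definition eff_res (Q : 'M[R]_(n, N)) (S : 'M[R]_n) (k j : 'I_N) : R :=
  X_mx Q S k k + X_mx Q S j j - 2%:R * X_mx Q S k j.

End Graphs.

From HB Require Import structures.
From mathcomp Require Import all_boot all_order all_algebra all_fingroup.
From mathcomp Require Import ring.
Set Implicit Arguments. Unset Strict Implicit. Unset Printing Implicit Defensive.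
Import Order.TTheory GRing.Theory Num.Theory.
Local Open Scope ring_scope.

(* Write 1 for the all-ones column and L = D - A.  With P = perm_mx s we get
   A = D P^T, hence L = D B for B = 1 - P^T, and the Laplacian of A_u equals
   K / 2 where K = B^T D B.  K is symmetric, positive semidefinite, and (by
   connectivity) its quadratic form vanishes only on multiples of 1.

   The reduced Lyapunov equation for S lifts to Y = Q^T S Q: M Y + Y M^T = Pi
   with M = Pi L, and Y 1 = 0, 1^T Y = 0; the effective resistances only depend
   on Y.
   Uniqueness then gives Y = Y_u, which is the theorem. *)

Section Centering.
Variables (R : rcfType) (n : nat).
Local Notation N := n.+1.
Local Notation one := (const_mx 1 : 'cV[R]_N).
Local Notation Pi := (Pi_mx R n).

Lemma Pi_sym : Pi^T = Pi.
Proof. by rewrite /Pi_mx linearB /= trmx1 linearZ /= trmx_const. Qed.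

Lemma Pi_one : Pi *m one = 0.
Proof.
have sum_ones : (const_mx 1 : 'M[R]_N) *m one = N%:R *: one.
  apply/matrixP => i j; rewrite !mxE (eq_bigr (fun _ => 1)) => [|k _]; last first.
    by rewrite !mxE mulr1.
  by rewrite sumr_const card_ord mulr1.
rewrite /Pi_mx mulmxBl mul1mx -scalemxAl sum_ones scalerA mulVf ?pnatr_eq0 //.
by rewrite scale1r subrr.
Qed.

Lemma one_Pi : one^T *m Pi = 0.
Proof. by rewrite -Pi_sym -trmx_mul Pi_one trmx0. Qed.

Lemma mulmx_Pi (X : 'M[R]_N) : X *m one = 0 -> X *m Pi = X.
Proof.
move=> X_one; rewrite /Pi_mx mulmxBr mulmx1 -scalemxAr.
suff -> : X *m (const_mx 1 : 'M[R]_N) = 0 by rewrite scaler0 subr0.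
apply/matrixP => i j; transitivity ((X *m one) i 0); last by rewrite X_one !mxE.
by rewrite !mxE; apply: eq_bigr => k _; rewrite !mxE.
Qed.

Lemma Pi_mulmx (X : 'M[R]_N) : one^T *m X = 0 -> Pi *m X = X.
Proof.
move=> one_X; rewrite -[X]trmxK -Pi_sym -trmx_mul mulmx_Pi //.
by rewrite -[one]trmxK -trmx_mul one_X trmx0.
Qed.

Lemma Pi_idem : Pi *m Pi = Pi.
Proof. exact: mulmx_Pi Pi_one. Qed.
End Centering.

Section LyapunovUniqueness.
Variables (R : rcfType) (n : nat).
Local Notation N := n.+1.
Local Notation one := (const_mx 1 : 'cV[R]_N).
Local Notation Pi := (Pi_mx R n).

Variable K : 'M[R]_N.
Hypothesis K_sym : K^T = K.
Hypothesis K_psd : forall v : 'cV[R]_N, 0 <= (v^T *m K *m v) 0 0.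
Hypothesis K_ker : forall v : 'cV[R]_N,
  (v^T *m K *m v) 0 0 = 0 -> exists c, v = c *: one.

Lemma trace_gram (X : 'M[R]_N) :
  \tr (X^T *m K *m X) = \sum_j ((col j X)^T *m K *m col j X) 0 0.
Proof.
apply: eq_bigr => j _; rewrite !mxE; apply: eq_bigr => a _; rewrite !mxE.
by congr (_ * _); apply: eq_bigr => b _; rewrite !mxE.
Qed.

Lemma trace_gram_ge0 (X : 'M[R]_N) : 0 <= \tr (X^T *m K *m X).
Proof. by rewrite trace_gram; apply: sumr_ge0 => j _; apply: K_psd. Qed.

(* A matrix with zero column sums and zero K-energy vanishes: its columns are
   constant, and constant columns summing to zero are zero. *)
Lemma trace_gram_eq0 (X : 'M[R]_N) :
  \tr (X^T *m K *m X) = 0 -> one^T *m X = 0 -> X = 0.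
Proof.
rewrite trace_gram => /psumr_eq0P col_null one_X.
have {}col_null j : ((col j X)^T *m K *m col j X) 0 0 = 0.
  by apply: col_null => // k _; apply: K_psd.
apply/matrixP => i j.
have [c Xj] := K_ker (col_null j).
have : (one^T *m X) 0 j = 0 by rewrite one_X mxE.
have Xkj k : X k j = c by have := congr1 (fun v : 'cV[R]_N => v k 0) Xj; rewrite !mxE mulr1.
rewrite mxE (eq_bigr (fun _ => c)) => [|k _]; last by rewrite !mxE mul1r Xkj.
rewrite sumr_const card_ord -mulr_natr => /eqP; rewrite mulf_eq0 pnatr_eq0 orbF => /eqP c0.
by rewrite Xkj c0 mxE.
Qed.

Lemma lyapunov_trace_identity (M Z : 'M[R]_N) :
  K *m M + M^T *m K = K *m K -> M *m Z + Z *m M^T = 0 ->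
  \tr ((Z *m K)^T *m K *m (Z *m K)) + \tr ((Z^T *m K)^T *m K *m (Z^T *m K)) = 0.
Proof.
move=> KM MZ.
have MZt : M *m Z^T + Z^T *m M^T = 0.
  by rewrite -[M in M *m _]trmxK -!trmx_mul -linearD /= addrC MZ trmx0.
have -> : \tr ((Z *m K)^T *m K *m (Z *m K)) = \tr (K *m Z *m (K *m K) *m Z^T).
  by rewrite trmx_mul K_sym -mulmxA mxtrace_mulC !mulmxA.
have -> : \tr ((Z^T *m K)^T *m K *m (Z^T *m K)) = \tr (K *m K *m Z *m K *m Z^T).
  by rewrite trmx_mul trmxK K_sym !mulmxA mxtrace_mulC !mulmxA.
have left_terms : \tr (K *m M *m Z *m K *m Z^T) + \tr (K *m Z *m M^T *m K *m Z^T) = 0.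
  rewrite -mxtraceD -!mulmxDl -(mulmxA K M) -(mulmxA K Z) -mulmxDr MZ.
  by rewrite mulmx0 !mul0mx mxtrace0.
have right_terms : \tr (K *m Z *m K *m M *m Z^T) + \tr (M^T *m K *m Z *m K *m Z^T) = 0.
  have := mxtrace_mulC M^T (K *m Z *m K *m Z^T); rewrite !mulmxA => ->.
  by rewrite -mxtraceD -!(mulmxA (K *m Z *m K)) -mulmxDr MZt mulmx0 mxtrace0.
rewrite -KM !(mulmxDr, mulmxDl) !mxtraceD !mulmxA.
by rewrite [X in X + _]addrC addrACA [X in X + _]addrC left_terms right_terms addr0.
Qed.

Lemma lyapunov_homogeneous (M Z : 'M[R]_N) :
  K *m M + M^T *m K = K *m K -> M *m Z + Z *m M^T = 0 ->
  Z *m one = 0 -> one^T *m Z = 0 -> Z = 0.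
Proof.
move=> KM MZ Z_one one_Z.
have /eqP := lyapunov_trace_identity KM MZ.
rewrite paddr_eq0 ?trace_gram_ge0 // => /andP[/eqP trZK /eqP trZtK].
have ZtK : Z^T *m K = 0.
  by apply: trace_gram_eq0 => //; rewrite mulmxA -trmx_mul Z_one trmx0 mul0mx.
have KZ : K *m Z = 0 by rewrite -[Z]trmxK -K_sym -trmx_mul ZtK trmx0.
by apply: trace_gram_eq0 => //; rewrite -mulmxA KZ mulmx0 mxtrace0.
Qed.

Lemma lyapunov_unique (M C Y1 Y2 : 'M[R]_N) :
  K *m M + M^T *m K = K *m K ->
  M *m Y1 + Y1 *m M^T = C -> M *m Y2 + Y2 *m M^T = C ->
  Y1 *m one = 0 -> Y2 *m one = 0 -> one^T *m Y1 = 0 -> one^T *m Y2 = 0 ->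
  Y1 = Y2.
Proof.
move=> KM eq1 eq2 Y1_one Y2_one one_Y1 one_Y2.
apply/eqP; rewrite -subr_eq0; apply/eqP; apply: (lyapunov_homogeneous KM).
- by rewrite mulmxBr mulmxBl addrACA -opprD eq1 eq2 subrr.
- by rewrite mulmxBl Y1_one Y2_one subrr.
- by rewrite mulmxBr one_Y1 one_Y2 subrr.
Qed.

(* From now on K also annihilates 1, so that K Pi = Pi K = K. *)
Hypothesis K_one : K *m one = 0.

Lemma one_K : one^T *m K = 0.
Proof. by rewrite -K_sym -trmx_mul K_one trmx0. Qed.

Lemma half_K_sym : (2^-1 *: K)^T = 2^-1 *: K.
Proof. by rewrite linearZ /= K_sym. Qed.

Lemma half_K_twice : 2^-1 *: K + 2^-1 *: K = K.
Proof. by rewrite -scalerDl (_ : 2^-1 + 2^-1 = 1 :> R) ?scale1r //; field. Qed.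

Lemma half_lyapunov : K *m (2^-1 *: K) + (2^-1 *: K)^T *m K = K *m K.
Proof. by rewrite half_K_sym -scalemxAl scalemxAr -mulmxDr half_K_twice. Qed.

(* A doubly-centered solution of (K/2) Y + Y (K/2) = Pi is a two-sided
   pseudo-inverse of K: K Y - Pi and Y K - Pi solve the homogeneous equation. *)
Lemma pseudo_inverse (Y : 'M[R]_N) :
  (2^-1 *: K) *m Y + Y *m (2^-1 *: K)^T = Pi ->
  Y *m one = 0 -> one^T *m Y = 0 -> K *m Y = Pi /\ Y *m K = Pi.
Proof.
have Mh_sym := half_K_sym; have Mh2 := half_K_twice.
set Mh := 2^-1 *: K in Mh_sym Mh2 *.
have MhK : Mh *m K = K *m Mh by rewrite -scalemxAl scalemxAr.
have MhPi : Mh *m Pi = Mh by rewrite -scalemxAl mulmx_Pi.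
have PiMh : Pi *m Mh = Mh by rewrite -scalemxAr Pi_mulmx // one_K.
have KPi : K *m Pi = K by rewrite mulmx_Pi.
have PiK : Pi *m K = K by rewrite Pi_mulmx // one_K.
rewrite Mh_sym => eqY Y_one one_Y.
split; apply/eqP; rewrite -subr_eq0; apply/eqP.
- apply: (lyapunov_homogeneous half_lyapunov); rewrite -/Mh ?Mh_sym.
  + rewrite mulmxBr mulmxBl !mulmxA MhK MhPi PiMh addrACA -opprD Mh2.
    by rewrite -!mulmxA -mulmxDr eqY KPi subrr.
  + by rewrite mulmxBl -mulmxA Y_one mulmx0 Pi_one subrr.
  + by rewrite mulmxBr mulmxA one_K mul0mx one_Pi subrr.
- apply: (lyapunov_homogeneous half_lyapunov); rewrite -/Mh ?Mh_sym.
  + rewrite mulmxBr mulmxBl !mulmxA MhPi PiMh addrACA -opprD Mh2.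
    by rewrite -!mulmxA -MhK !mulmxA -mulmxDl eqY PiK subrr.
  + by rewrite mulmxBl -mulmxA K_one mulmx0 Pi_one subrr.
  + by rewrite mulmxBr mulmxA one_Y mul0mx one_Pi subrr.
Qed.

(* A two-sided pseudo-inverse of K solves every Lyapunov equation whose
   coefficient M satisfies K M + M^T K = K K and Pi M = M: conjugate by Y. *)
Lemma lyapunov_transfer (M Y : 'M[R]_N) :
  K *m M + M^T *m K = K *m K -> Pi *m M = M ->
  K *m Y = Pi -> Y *m K = Pi -> M *m Y + Y *m M^T = Pi.
Proof.
move=> KM PiM KY YK.
have MtPi : M^T *m Pi = M^T by rewrite -Pi_sym -trmx_mul PiM.
have := congr1 (fun X => Y *m X *m Y) KM.
rewrite mulmxDr mulmxDl !mulmxA YK -[Y *m M^T *m K *m Y]mulmxA KY.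
rewrite PiM -[Pi *m K *m Y]mulmxA KY Pi_idem.
by rewrite -mulmxA MtPi.
Qed.
End LyapunovUniqueness.

Lemma lifted_lyapunov (R : rcfType) (n : nat) (Q : 'M[R]_(n, n.+1)) (L : 'M[R]_n.+1)
    (S : 'M[R]_n) :
  is_Q Q -> Q *m L *m Q^T *m S + S *m (Q *m L *m Q^T)^T = 1%:M ->
  [/\ (Pi_mx R n *m L) *m (Q^T *m S *m Q) + (Q^T *m S *m Q) *m (Pi_mx R n *m L)^T
        = Pi_mx R n,
      (Q^T *m S *m Q) *m (const_mx 1 : 'cV_n.+1) = 0
    & (const_mx 1 : 'cV_n.+1)^T *m (Q^T *m S *m Q) = 0].
Proof.
move=> [Q_one QQt QtQ] eqS; rewrite -QtQ; split.
- have := congr1 (fun X => Q^T *m X *m Q) eqS.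
  by rewrite mulmxDr mulmxDl mulmx1 !trmx_mul !trmxK !mulmxA.
- by rewrite -mulmxA Q_one mulmx0.
- by rewrite !mulmxA -trmx_mul Q_one trmx0 !mul0mx.
Qed.

Section OrthogonalFactor.
Variables (R : rcfType) (n : nat).
Local Notation N := n.+1.
Local Notation one := (const_mx 1 : 'cV[R]_N).
Local Notation Pi := (Pi_mx R n).
Variables (D U : 'M[R]_N).
Hypothesis D_sym : D^T = D.
Hypothesis U_orth : U *m U^T = 1%:M.
Hypothesis U_one : U *m one = one.
Let B : 'M[R]_N := 1%:M - U.

Lemma diff_one : B *m one = 0.
Proof. by rewrite /B mulmxBl mul1mx U_one subrr. Qed.

Lemma diff_gram : B *m B^T = B + B^T.
Proof.
rewrite /B linearB /= trmx1 mulmxBl !mulmxBr !mul1mx !mulmx1 U_orth.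
by rewrite opprB addrC.
Qed.

Lemma factor_lyapunov :
  let K := B^T *m D *m B in
  K *m (Pi *m (D *m B)) + (Pi *m (D *m B))^T *m K = K *m K.
Proof.
move=> K.
have BPi : B *m Pi = B by rewrite mulmx_Pi // diff_one.
have PiBt : Pi *m B^T = B^T by rewrite -Pi_sym -trmx_mul BPi.
have KK : K *m K = B^T *m D *m (B + B^T) *m D *m B by rewrite -diff_gram /K !mulmxA.
rewrite KK (mulmxDr (B^T *m D) B B^T) (mulmxDl _ _ D) (mulmxDl _ _ B).
rewrite !trmx_mul Pi_sym D_sym /K !mulmxA.
by rewrite -(mulmxA _ B Pi) BPi -(mulmxA (B^T *m D) Pi B^T) PiBt.
Qed.
End OrthogonalFactor.

(* The graph of the theorem: D = A P with P = perm_mx s, so A = D P^T, i.e.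
   every node i has a single out-neighbour-weight d_i on the edge i -> s^-1 i.
   K = (1 - P^T)^T D (1 - P^T) is twice the Laplacian of A_u. *)
Section BalancedGraph.
Variables (R : rcfType) (n : nat).
Local Notation N := n.+1.
Local Notation one := (const_mx 1 : 'cV[R]_N).
Variables (A : 'M[R]_N) (s : 'S_N).
Hypothesis A_nonneg : nonneg_adj A.
Hypothesis A_connected : connected_graph A.
Hypothesis degree_perm : degree_mx A = A *m perm_mx s.

Local Notation D := (degree_mx A).
Local Notation d := (out_degree A).
Local Notation P := (perm_mx s : 'M[R]_N).
Local Notation Pt := (perm_mx s^-1 : 'M[R]_N).

Definition sym_laplacian : 'M[R]_N := (1%:M - Pt)^T *m D *m (1%:M - Pt).

Lemma degree_sym : D^T = D.
Proof. exact: tr_diag_mx. Qed.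

Lemma Pt_orth : Pt *m Pt^T = 1%:M.
Proof. by rewrite tr_perm_mx invgK -perm_mxM mulVg perm_mx1. Qed.

Lemma Pt_one : Pt *m one = one.
Proof. by rewrite -row_permE; apply/matrixP => i j; rewrite !mxE. Qed.

Lemma adjacency_factor : A = D *m Pt.
Proof. by rewrite degree_perm -mulmxA -perm_mxM mulgV perm_mx1 mulmx1. Qed.

Lemma adjacency_entry i j : A i j = d i *+ (i == s j).
Proof. by rewrite {1}adjacency_factor -col_permE !mxE. Qed.

Lemma laplacian_factor : laplacian A = D *m (1%:M - Pt).
Proof. by rewrite /laplacian mulmxBr mulmx1 -adjacency_factor. Qed.

Lemma out_degree_ge0 i : 0 <= d i.
Proof. by apply: sumr_ge0 => j _; apply: A_nonneg. Qed.

Lemma diff_entry (v : 'cV[R]_N) k : ((1%:M - Pt) *m v) k 0 = v k 0 - v (s^-1 k)%g 0.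
Proof. by rewrite mulmxBl mul1mx -row_permE !mxE. Qed.

Lemma sym_laplacian_form (v : 'cV[R]_N) :
  (v^T *m sym_laplacian *m v) 0 0 = \sum_k d k * (v k 0 - v (s^-1 k)%g 0) ^+ 2.
Proof.
rewrite /sym_laplacian !mulmxA -trmx_mul -mulmxA mxE; apply: eq_bigr => k _.
by rewrite -diff_entry /degree_mx mul_mx_diag !mxE; ring.
Qed.

Lemma sym_laplacian_psd (v : 'cV[R]_N) : 0 <= (v^T *m sym_laplacian *m v) 0 0.
Proof.
rewrite sym_laplacian_form; apply: sumr_ge0 => k _.
by rewrite mulr_ge0 ?out_degree_ge0 ?sqr_ge0.
Qed.

(* Connectivity: a vanishing form forces v to be constant along every edge, hence
   equal to its value at the globally reachable node. *)
Lemma sym_laplacian_ker (v : 'cV[R]_N) :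
  (v^T *m sym_laplacian *m v) 0 0 = 0 -> exists c, v = c *: one.
Proof.
rewrite sym_laplacian_form => /psumr_eq0P terms0.
have {}terms0 k : d k * (v k 0 - v (s^-1 k)%g 0) ^+ 2 = 0.
  by apply: terms0 => // i _; rewrite mulr_ge0 ?out_degree_ge0 ?sqr_ge0.
have edge_const i j : edge_rel A i j -> v i 0 = v j 0.
  rewrite /edge_rel adjacency_entry; case: eqP => [->|_]; last by rewrite ltxx.
  move=> d_pos; have /eqP := terms0 (s j).
  by rewrite permK mulf_eq0 (gt_eqF d_pos) sqrf_eq0 subr_eq0 => /eqP.
have [g reach_g] := A_connected.
exists (v g 0); apply/matrixP => i j; rewrite (ord1 j) !mxE mulr1.
have /connectP [p path_p ->] := reach_g i.
by elim: p i path_p => [|y p IH] i //= /andP [/edge_const -> /IH].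
Qed.

Lemma sym_laplacian_sym : sym_laplacian^T = sym_laplacian.
Proof. by rewrite /sym_laplacian !trmx_mul trmxK degree_sym mulmxA. Qed.

Lemma sym_laplacian_one : sym_laplacian *m one = 0.
Proof. by rewrite /sym_laplacian -mulmxA diff_one ?Pt_one ?mulmx0. Qed.

(* Each node s i receives exactly the weight d (s i), from its unique in-neighbour. *)
Lemma in_degree i : \sum_k A k i = d (s i).
Proof.
rewrite (bigD1 (s i)) //= adjacency_entry eqxx mulr1n big1 ?addr0 // => k /negPf ki.
by rewrite adjacency_entry ki mulr0n.
Qed.

Lemma laplacian_undirected : laplacian (undirected_adj A) = 2^-1 *: sym_laplacian.
Proof.
have degree_u : degree_mx (undirected_adj A) = 2^-1 *: (D + P *m D *m Pt).
  rewrite -row_permE -col_permE; apply/matrixP => i j; rewrite !mxE.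
  rewrite (inj_eq (@perm_inj _ s)).
  have -> : out_degree (undirected_adj A) i = 2^-1 * (d i + d (s i)).
    rewrite -in_degree /out_degree -big_split big_distrr /=.
    by apply: eq_bigr => k _; rewrite /undirected_adj !mxE.
  by case: (i == j); rewrite ?mulr1n ?mulr0n ?addr0 ?mulr0.
have A_tr : A^T = P *m D.
  by rewrite {1}adjacency_factor trmx_mul degree_sym tr_perm_mx invgK.
have diff_tr : (1%:M - Pt)^T = 1%:M - P by rewrite linearB /= trmx1 tr_perm_mx invgK.
rewrite /laplacian degree_u /undirected_adj A_tr -scalerBr; congr (_ *: _).
rewrite [in X in _ - (X + _)]adjacency_factor.
rewrite /sym_laplacian diff_tr !mulmxBl !mul1mx !mulmxBr !mulmx1.
by rewrite opprD opprB !addrA [D + _ - _]addrAC.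
Qed.
End BalancedGraph.

Theorem proposition1 (R : rcfType) (n : nat) (A P : 'M[R]_n.+1)
    (Q Qu : 'M[R]_(n, n.+1)) (S Su : 'M[R]_n) :
  nonneg_adj A ->
  connected_graph A ->
  is_perm_mx P ->
  degree_mx A = A *m P ->
  is_Q Q -> is_Sigma A Q S ->
  is_Q Qu -> is_Sigma (undirected_adj A) Qu Su ->
  forall k j : 'I_n.+1, eff_res Q S k j = eff_res Qu Su k j.
Proof.
move=> A_nonneg A_conn /is_perm_mxP [s ->] degree_perm isQ eqS isQu eqSu k j.
pose K := sym_laplacian A s; pose Pi := Pi_mx R n.
have K_sym : K^T = K := sym_laplacian_sym A s.
have K_psd := sym_laplacian_psd s A_nonneg.
have K_ker := sym_laplacian_ker A_nonneg A_conn degree_perm.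
have K_one : K *m const_mx 1 = 0 := sym_laplacian_one A s.
have [eqY Y_one one_Y] := lifted_lyapunov isQ eqS.
have [eqYu Yu_one one_Yu] := lifted_lyapunov isQu eqSu.
have KM : K *m (Pi *m laplacian A) + (Pi *m laplacian A)^T *m K = K *m K.
  by rewrite (laplacian_factor degree_perm); apply: factor_lyapunov;
    [exact: degree_sym | exact: Pt_orth | exact: Pt_one].
have PiM : Pi *m (Pi *m laplacian A) = Pi *m laplacian A by rewrite mulmxA Pi_idem.
rewrite (laplacian_undirected degree_perm) -scalemxAr Pi_mulmx ?(one_K K_sym K_one) // in eqYu.
have [KYu YuK] := pseudo_inverse K_sym K_psd K_ker K_one eqYu Yu_one one_Yu.
have eqYu' := lyapunov_transfer KM PiM KYu YuK.
by rewrite /eff_res /X_mx (lyapunov_unique K_sym K_psd K_ker KM eqY eqYu').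
Qed.
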